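(* Let $\mathrm r=(r_1,\dots,r_d)\in\mathbb{Z}_+^d$ with $\mathrm r>0$, let $x\in\bar S_d^{\mathrm r}$ with smallest solution $\mathrm k=(k_1,\dots,k_d)\in\mathbb{N}^d$ of $(\mathrm r,x)$, and assume that $(\mathrm r,x)$ is a simple system. Then the number of good cyclical permutations of $x$ (i.e. the number of $\mathrm q\in\mathbb{Z}_+^d$, $\mathrm q\le\mathrm k-1_d$, such that $\mathrm k$ is the smallest solution of $(\mathrm r,x_{\mathrm q,\mathrm k})$) is $$\sum_{(j_1,\dots,j_d)\in D}\ \prod_{i=1}^d k_{j_i i},$$ where $k_{ij}=x^{i,j}(k_i)$ for $i,j\in[d]$ and $k_{0i}=r_i$.
   Context: $d\ge2$, $[d]=\{1,\dots,d\}$, $\mathbb N=\{1,2,\dots\}$, $1_d=(1,\dots,1)$. $S_d$: families $x=(x^{(1)},\dots,x^{(d)})$, $x^{(i)}=(x^{i,1},\dots,x^{i,d})$ a $\mathbb{Z}^d$-valued sequence indexed by $\{0,\dots,n_i\}$, $x^{(i)}_0=0$, $x^{i,j}$ nondecreasing for $i\ne j$, $x^{i,i}_{n+1}-x^{i,i}_n\ge-1$; $(n_1,\dots,n_d)$ is its length; $x^{i,j}(n)=x^{i,j}_n$. A solution of $(\mathrm r,x)$ is $\mathrm s\in\mathbb{Z}_+^d$, $\mathrm s\le$ length, with $r_j+\sum_ix^{i,j}(s_i)=0$ for all $j$; the smallest solution is one that is coordinatewise $\le$ all solutions. $\bar S_d^{\mathrm r}$ is the set of $x\in S_d$ whose length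 lies in $\mathbb{N}^d$ and is the smallest solution of $(\mathrm r,x)$, and with $x^{i,i}_k=-k$ for all $k,i$. For $x\in\bar S_d^{\mathrm r}$ with smallest solution $\mathrm k$, $(\mathrm r,x)$ is a simple system if for every $i\in[d]$ there is $k'_i\le k_i-1$ such that $x^{i,j}(k)=0$ for all $0\le k\le k'_i$ and $j\ne i$, and $x^{i,j}(k)=x^{i,j}(k_i)$ for all $k'_i+1\le k\le k_i$ and $j\ne i$ (i.e. for each $i$ the sequences $x^{i,j}$, $j\ne i$, have at most one positive jump, occurring at a common time). Cyclical permutations: for $g$ on $\{0,\dots,m\}$ with $g(0)=0$, $1\le n\le m$, $0\le q\le n-1$: $g_{q,n}(h)=g(q+h)-g(q)$ for $0\le h\le n-q$, $g_{q,n}(h)=g(h-(n-q))+g(n)-g(q)$ for $n-q\le h\le n$, $g_{q,n}(h)=g(h)$ for $h\ge n$; $x_{\mathrm q,\mathrm k}=(x^{(1)}_{q_1,k_1},\dots,x^{(d)}_{q_d,k_d})$. $D$ is the set of vectors $(j_1,\dots,j_d)\in\{0,1,\dots,d\}^d$ coding an elementary forest, i.e. a forest with exactly one vertex of each type $i\in[d]$, where $j_i$ is the type of the parent of the vertex of type $i$ and $j_i=0$ if that vertex is a root; equivalently $j_i\ne i$ and for every $i$ the iterates $i,j_i,j_{j_i},\dots$ eventually reach $0$. *)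

From mathcomp Require Import all_boot all_order all_algebra.
Set Implicit Arguments. Unset Strict Implicit. Unset Printing Implicit Defensive.
Import Order.TTheory GRing.Theory Num.Theory.
Local Open Scope ring_scope.

(* A family x = (x^(1),...,x^(d)) is represented by  x : 'I_d -> nat -> 'I_d -> int
   with  x i h j = x^{i,j}(h)  (types 1..d are the ordinals 0..d-1);
   together with its length  n : 'I_d -> nat  (x^(i) is indexed by {0,...,n i});
   values of x i h for h > n i are irrelevant. *)
Definition xfam (d : nat) := 'I_d -> nat -> 'I_d -> int.

Definition in_S (d : nat) (x : xfam d) (n : 'I_d -> nat) : Prop :=
  (forall i j, x i 0%N j = 0) /\
  (forall i j, i != j -> forall h, (h < n i)%N -> x i h j <= x i h.+1 j) /\
  (forall i h, (h < n i)%N -> - 1 <= x i h.+1 i - x i h i).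

Definition is_solution (d : nat) (r : 'I_d -> nat) (x : xfam d)
    (n : 'I_d -> nat) (s : 'I_d -> nat) : bool :=
  [forall i, (s i <= n i)%N] &&
  [forall j, (r j)%:Z + \sum_(i < d) x i (s i) j == 0].

(* s is the smallest solution of (r, x): a solution that is coordinatewise
   below every solution (every solution t satisfies t <= n, so t ranges over
   the finite type of vectors with t i in {0,...,n i}). *)
Definition is_smallest_solution (d : nat) (r : 'I_d -> nat) (x : xfam d)
    (n : 'I_d -> nat) (s : 'I_d -> nat) : bool :=
  is_solution r x n s &&
  [forall t : {dffun forall i : 'I_d, 'I_(n i).+1},
     is_solution r x n (fun i => nat_of_ord (t i)) ==> [forall i, (s i <= t i)%N]].

Definition in_Sbar (d : nat) (r : 'I_d -> nat) (x : xfam d) (n : 'I_d -> nat) : Prop :=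
  in_S x n /\ (forall i, (0 < n i)%N) /\ is_smallest_solution r x n n /\
  (forall i h, (h <= n i)%N -> x i h i = - (h%:Z)).

Definition simple_system (d : nat) (x : xfam d) (k : 'I_d -> nat) : Prop :=
  forall i : 'I_d, exists k' : nat, (k' <= k i - 1)%N /\
    (forall h j, (h <= k')%N -> j != i -> x i h j = 0) /\
    (forall h j, (k'.+1 <= h <= k i)%N -> j != i -> x i h j = x i (k i) j).

Definition cycf (g : nat -> int) (q n h : nat) : int :=
  if (h <= n - q)%N then g (q + h)%N - g q
  else if (h <= n)%N then g (h - (n - q))%N + g n - g q
  else g h.

Definition cyc (d : nat) (x : xfam d) (q k : 'I_d -> nat) : xfam d :=
  fun i h j => cycf (fun m => x i m j) (q i) (k i) h.

(* Elementary forests: j : 'I_d -> option 'I_d, j i = None means the vertex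
   of type i is a root (code 0), j i = Some a means its parent has type a. *)
Definition forest_step (d : nat) (j : {ffun 'I_d -> option 'I_d}) (o : option 'I_d)
  : option 'I_d := if o is Some a then j a else None.

(* j i <> i and the iterates i, j_i, j_{j_i}, ... reach 0 (= None); since there
   are only d types, reaching None happens within d steps iff it happens at all. *)
Definition in_D (d : nat) (j : {ffun 'I_d -> option 'I_d}) : bool :=
  [forall i, (j i != Some i) &&
     [exists m : 'I_d.+1, iter m (forest_step j) (Some i) == None]].

Definition kcoef (d : nat) (r : 'I_d -> nat) (x : xfam d) (k : 'I_d -> nat)
  (o : option 'I_d) (i : 'I_d) : int :=
  if o is Some a then x a (k a) i else (r i)%:Z.

From mathcomp Require Import all_boot all_order all_algebra zify.
Set Implicit Arguments. Unset Strict Implicit. Unset Printing Implicit Defensive.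
Import Order.TTheory GRing.Theory Num.Theory.

(* In a simple system each x^{i,j} (j <> i) is a step function jumping once, from 0 to
   k_{ij}; a cyclical permutation by q_i is again such a step function, now jumping
   right after t_i = p_i - q_i mod k_i, and q |-> t is a bijection.  A vector s <= k then
   solves the permuted system iff s_j = r_j + sum_{i <> j, t_i < s_i} k_{ij}, i.e. iff the
   set of types that have jumped is a fixpoint of the monotone activation map
   A |-> {i | t_i < r_i + sum_{a in A, a <> i} k_{ai}}; so k is the smallest solution iff
   iterating this map from the empty set activates every type.  Recording the round L_i
   at which i is activated, the t's with a given level function L form a box whose side
   in direction i is r_i if L_i = 0 and sum_{L_a = L_i - 1} k_{ai} otherwise.  Expanding
   the product of these sums chooses for every vertex of positive depth a parent one
   level lower: this enumerates the elementary forests, each exactly once, through its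
   depth function. *)

Lemma card_ord_range n lo hi : hi <= n -> #|[pred u : 'I_n | lo <= u < hi]| = hi - lo.
Proof.
move=> hi_n; rewrite -sum1_card (eq_bigl (fun u : 'I_n => (lo <= u) && (u < hi))) //.
rewrite -(big_ord_widen_cond n (leq lo) (fun _ => 1)) //.
by rewrite -[RHS]muln1 -sum_nat_const_nat big_geq_mkord.
Qed.

Lemma big_option_cond (R : Type) (idx : R) (op : Monoid.com_law idx) (T : finType)
    (P : pred (option T)) (F : option T -> R) :
  \big[op/idx]_(o | P o) F o
  = op (if P None then F None else idx) (\big[op/idx]_(a | P (Some a)) F (Some a)).
Proof.
rewrite (bigID (pred1 None)) /=.
have -> : \big[op/idx]_(o | P o && (o == None)) F o = if P None then F None else idx.
  by case: ifP => PN; [apply: big_pred1 | apply: big_pred0] => -[a|]; rewrite ?PN ?andbF.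
rewrite (reindex_omap Some id) /=; last by case=> [a|] //= /andP[].
by under eq_bigl do rewrite eqxx !andbT.
Qed.

Lemma fixset_least (T : finType) (F : {set T} -> {set T}) (X : {set T}) :
  {homo F : A B / A \subset B} -> F X = X -> fixset F \subset X.
Proof.
move=> F_mono FX; rewrite /fixset; elim: #|T| => [|m IHm] /=; first exact: sub0set.
by rewrite -FX; apply: F_mono.
Qed.

Lemma eq_fixset (T : finType) (F G : {set T} -> {set T}) : F =1 G -> fixset F = fixset G.
Proof. by move=> FG; rewrite /fixset (eq_iter FG). Qed.

Section LevelSets.
Variable d : nat.
Implicit Types (F : {set 'I_d} -> {set 'I_d}) (L : {ffun 'I_d -> 'I_d}).

Fact level_subproof F (i : 'I_d) : (fix_order F i).-1 < d.
Proof. by have := fix_order_le_max F i; rewrite card_ord; have := ltn_ord i; lia. Qed.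

(* [level F i] is the round, counted from 0, at which [i] enters the least fixpoint of [F]. *)
Definition level F : {ffun 'I_d -> 'I_d} := [ffun i => Ordinal (level_subproof F i)].

Lemma iter_levelP F L : {homo F : A B / A \subset B} ->
  (forall m, iter m F set0 = [set a | L a < m]) <-> fixset F = setT /\ level F = L.
Proof.
move=> F_mono; have iterE m a : (a \in iter m F set0) = (0 < fix_order F a <= m).
  exact: in_iter_fixE.
split=> [iterL | [fixT <-] m].
  have inL a m : (0 < fix_order F a <= m) = (L a < m) by rewrite -iterE iterL inE.
  have fixT : fixset F = setT.
    apply/eqP; rewrite -subTset; apply/subsetP => a _.
    by apply: (subsetP (iter_sub_fix F_mono (L a).+1)); rewrite iterE inL.
  split=> //; apply/ffunP => a; apply: val_inj; rewrite ffunE /=.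
  have := inL a (fix_order F a); have := inL a (L a).+1.
  rewrite fix_order_gt0 fixT inE leqnn /=; lia.
apply/setP => a; rewrite iterE inE ffunE /=.
have := fix_order_gt0 F a; rewrite fixT inE; lia.
Qed.

End LevelSets.

Section Forests.
Variable d : nat.
Implicit Types (j : {ffun 'I_d -> option 'I_d}) (A B : {set 'I_d}) (L : {ffun 'I_d -> 'I_d}).

Definition forest_grow j A := [set i | if j i is Some a then a \in A else true].

Lemma forest_grow_mono j : {homo forest_grow j : A B / A \subset B}.
Proof.
move=> A B /subsetP sAB; apply/subsetP => i; rewrite !inE.
by case: (j i) => // a /sAB.
Qed.

Lemma iter_forest_step_None j m : iter m (forest_step j) None = None.
Proof. by elim: m => //= m ->. Qed.

Lemma mem_iter_forest_grow j m i :
  (i \in iter m (forest_grow j) set0) = (iter m (forest_step j) (Some i) == None).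
Proof.
elim: m i => [|m IHm] i; first by rewrite inE.
rewrite [in RHS]iterSr /= inE; case: (j i) => [a|]; first exact: IHm.
by rewrite iter_forest_step_None.
Qed.

Lemma in_D_fixset j : in_D j = (fixset (forest_grow j) == setT).
Proof.
apply/forallP/eqP => [inDj | fixT i].
  apply/eqP; rewrite -subTset; apply/subsetP => i _.
  have /andP[_ /existsP[m /eqP reach]] := inDj i.
  apply: (subsetP (iter_sub_fix (@forest_grow_mono j) m)).
  by rewrite mem_iter_forest_grow reach.
have : i \in fixset (forest_grow j) by rewrite fixT inE.
rewrite /fixset card_ord mem_iter_forest_grow => reach.
apply/andP; split; last by apply/existsP; exists ord_max.
apply: contraTneq reach => ji.
have loop m : iter m (forest_step j) (Some i) = Some i by elim: m => //= m ->; rewrite /= ji.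
by rewrite loop.
Qed.

Definition depth_parent L i (o : option 'I_d) : bool :=
  if o is Some a then (L a).+1 == L i else L i == 0 :> nat.

Lemma depth_family_iterP L j :
  j \in family (depth_parent L) <->
  forall m, iter m (forest_grow j) set0 = [set a | L a < m].
Proof.
split=> [/familyP par | iterL].
  elim=> [|m IHm] /=; first by apply/setP => a; rewrite !inE.
  apply/setP => i; rewrite IHm !inE.
  have := par i; rewrite unfold_in /depth_parent.
  by case: (j i) => [a /eqP <-|/eqP ->]; rewrite ?inE ?ltnS.
apply/familyP => i.
have grownE m : (L i < m.+1) = (if j i is Some a then L a < m else true).
  have /setP/(_ i) := iterL m.+1; rewrite /= iterL !inE => <-.
  by case: (j i) => // a; rewrite inE.
rewrite unfold_in /depth_parent; case: (j i) grownE => [a|] grownE.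
  by have := grownE (L i); have := grownE (L a).+1; rewrite !ltnSn; lia.
by have := grownE 0; rewrite ltnS leqn0.
Qed.

Lemma depth_familyE L j :
  j \in family (depth_parent L) <-> in_D j /\ level (forest_grow j) = L.
Proof.
rewrite in_D_fixset; apply: iff_trans (depth_family_iterP L j) _.
apply: iff_trans (iter_levelP L (@forest_grow_mono j)) _.
by split=> -[fixT levL]; split=> //; apply/eqP.
Qed.

End Forests.

Section Activation.
Variables (d : nat) (r : 'I_d -> nat) (c : 'I_d -> 'I_d -> nat).
Implicit Types (A B : {set 'I_d}) (t s : 'I_d -> nat) (L : {ffun 'I_d -> 'I_d}).

Definition supply A j := r j + \sum_(a in A | a != j) c a j.

Lemma supplyS A B j : A \subset B -> supply A j <= supply B j.
Proof.
move=> /subsetP sAB; rewrite leq_add2l [leqLHS]big_mkcond [leqRHS]big_mkcond /=.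
by apply: leq_sum => a _; case: ifP => // /andP[/sAB -> ->].
Qed.

Definition activate t A := [set i | t i < supply A i].

Lemma activate_mono t : {homo activate t : A B / A \subset B}.
Proof.
move=> A B sAB; apply/subsetP => i; rewrite !inE => /leq_trans; apply; exact: supplyS.
Qed.

Definition threshold_solution t s := forall j, s j = supply [set i | t i < s i] j.

Lemma fixset_activateP t : (forall i, t i < supply setT i) ->
  fixset (activate t) = setT <->
  (forall s, (forall i, s i <= supply setT i) -> threshold_solution t s ->
     forall i, supply setT i <= s i).
Proof.
move=> t_lt; split=> [fixT s _ s_sol i | least].
  have fix_s : activate t [set i | t i < s i] = [set i | t i < s i].
    by apply/setP => a; rewrite !inE -s_sol.
  have := fixset_least (@activate_mono t) fix_s; rewrite fixT subTset => /eqP s_full.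
  by rewrite s_sol s_full.
set A := fixset (activate t).
have fixA : activate t A = A := fixsetK (@activate_mono t).
have A_sol : threshold_solution t (supply A).
  by move=> j; rewrite /activate in fixA; rewrite fixA.
apply/eqP; rewrite -subTset; apply/subsetP => i _; rewrite -fixA inE.
exact: leq_trans (t_lt i) (least _ (fun j => supplyS j (subsetT A)) A_sol i).
Qed.

Definition level_supply L n := supply [set a | L a < n].

Definition level_floor L i := if (L i : nat) is n.+1 then level_supply L n i else 0.

Definition level_width L i := level_supply L (L i) i - level_floor L i.

Definition leveled L t := [forall i, level_floor L i <= t i < level_supply L (L i) i].

Lemma level_supplyS L m n i : m <= n -> level_supply L m i <= level_supply L n i.
Proof.
by move=> le_mn; apply: supplyS; apply/subsetP => a; rewrite !inE => /leq_trans; apply.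
Qed.

Lemma leveled_iterP L t :
  leveled L t <-> forall m, iter m (activate t) set0 = [set a | L a < m].
Proof.
split=> [/forallP lev | iterL].
  elim=> [|m IHm] /=; first by apply/setP => a; rewrite !inE.
  apply/setP => i; rewrite IHm /activate !inE ltnS -/(level_supply L m i).
  have /andP[floor_t t_sup] := lev i.
  case: (leqP (L i) m) => [Lm | mL]; first exact: leq_trans t_sup (level_supplyS L i Lm).
  apply/negbTE; rewrite -leqNgt; apply: leq_trans floor_t.
  by rewrite /level_floor; case: (L i : nat) mL => // n; rewrite ltnS; apply: level_supplyS.
have activeE m i : (t i < level_supply L m i) = (L i <= m).
  by have /setP/(_ i) := iterL m.+1; rewrite /= iterL /activate !inE.
apply/forallP => i; rewrite activeE leqnn andbT /level_floor.
by case: (L i : nat) (activeE ^~ i) => // n actE; rewrite leqNgt actE ltnn.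
Qed.

Lemma leveledE L t : leveled L t <-> fixset (activate t) = setT /\ level (activate t) = L.
Proof. exact: iff_trans (leveled_iterP L t) (iter_levelP L (@activate_mono t)). Qed.

Lemma card_leveled (k : 'I_d -> nat) L : (forall i, k i = supply setT i) ->
  #|[pred t : {dffun forall i, 'I_(k i)} | leveled L (fun i => t i)]|
  = \prod_i level_width L i.
Proof.
move=> kE.
pose box i : pred 'I_(k i) :=
  [pred u : 'I_(k i) | level_floor L i <= u < level_supply L (L i) i].
transitivity #|(family box : simpl_pred {dffun forall i, 'I_(k i)})|.
  by apply: eq_card => t; rewrite !inE.
rewrite card_family foldrE big_map big_enum /=; apply: eq_bigr => i _.
by apply: card_ord_range; rewrite kE supplyS ?subsetT.
Qed.

Lemma card_fixset_activate (k : 'I_d -> nat) : (forall i, k i = supply setT i) ->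
  #|[pred t : {dffun forall i, 'I_(k i)} | fixset (activate (fun i => t i)) == setT]|
  = \sum_L \prod_i level_width L i.
Proof.
move=> kE; pose lev (t : {dffun forall i, 'I_(k i)}) := level (activate (fun i => t i)).
rewrite -sum1_card (partition_big lev xpredT) //=.
apply: eq_bigr => L _; rewrite -(card_leveled L kE) -sum1_card; apply: eq_bigl => t.
rewrite !inE /lev; apply/andP/idP => [[/eqP fixT /eqP levL] | /leveledE[-> ->]] //.
exact/leveledE.
Qed.

Definition coef (o : option 'I_d) i := if o is Some a then c a i else r i.

Lemma level_widthE L i : level_width L i = \sum_(o | depth_parent L i o) coef o i.
Proof.
rewrite big_option_cond /depth_parent /level_width /level_floor /level_supply /supply /=.
case Li: (L i : nat) => [|n].
  by rewrite subn0 !big_pred0 ?addn0 // => a; rewrite inE ltn0.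
rewrite subnDl add0n (bigID (fun a => L a < n)) /=.
rewrite (eq_bigl (fun a => (a \in [set a | L a < n]) && (a != i))) => [|a]; last first.
  by rewrite !inE; case: (eqVneq a i) => [->|]; rewrite ?andbT ?andbF ?Li //; lia.
rewrite addKn; apply: eq_bigl => a; rewrite inE eqSS.
by case: (eqVneq a i) => [->|]; rewrite ?andbT ?andbF ?Li //; lia.
Qed.

Lemma sum_level_widths :
  \sum_L \prod_i level_width L i
  = \sum_(j : {ffun 'I_d -> option 'I_d} | in_D j) \prod_i coef (j i) i.
Proof.
under eq_bigr do under eq_bigr do rewrite level_widthE.
under eq_bigr do rewrite bigA_distr_big_dep.
rewrite [RHS](partition_big (fun j => level (forest_grow j)) xpredT) //=.
apply: eq_bigr => L _; apply: eq_bigl => j.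
by apply/idP/andP => [/depth_familyE[-> ->] | [inDj /eqP levL]] //; apply/depth_familyE.
Qed.

End Activation.

(* Under [cycf _ q n], a step function on {0..n} jumping right after [p] becomes one
   jumping right after [p - q mod n]. *)
Definition cyc_jump (p q n : nat) : nat := if q <= p then p - q else n - q + p.

Lemma cyc_jump_lt p q n : p < n -> q < n -> cyc_jump p q n < n.
Proof. by rewrite /cyc_jump; case: ifP; lia. Qed.

Lemma cyc_jump_inj p n q q' :
  p < n -> q < n -> q' < n -> cyc_jump p q n = cyc_jump p q' n -> q = q'.
Proof. by rewrite /cyc_jump; case: ifP; case: ifP; lia. Qed.

Local Open Scope ring_scope.

Lemma cycf_step (g : nat -> int) (p q n : nat) (C : int) :
  (p < n)%N -> (q < n)%N -> (forall m, (m <= n)%N -> g m = if (p < m)%N then C else 0) ->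
  forall h, (h <= n)%N -> cycf g q n h = if (cyc_jump p q n < h)%N then C else 0.
Proof.
move=> pn qn gE h hn; rewrite /cycf /cyc_jump.
case: (leqP q p) => qp; case: (leqP h (n - q)) => h_le; rewrite ?hn !gE; try lia;
  by do ![case: ifP => ?]; lia.
Qed.

Lemma cycf_opp_id (g : nat -> int) (q n : nat) :
  (q < n)%N -> (forall m, (m <= n)%N -> g m = - m%:Z) ->
  forall h, (h <= n)%N -> cycf g q n h = - h%:Z.
Proof.
move=> qn gE h hn; rewrite /cycf.
by case: (leqP h (n - q)) => h_le; last rewrite hn; rewrite !gE; lia.
Qed.

Lemma in_S_ge0 d (x : xfam d) n a i h : in_S x n -> a != i -> (h <= n a)%N -> 0 <= x a h i.
Proof.
move=> [x0 [x_mono _]] ai; elim: h => [|h IHh] h_le; first by rewrite x0.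
exact: le_trans (IHh (ltnW h_le)) (x_mono a i ai h h_le).
Qed.

Lemma eq_is_solution d r (x : xfam d) n s s' :
  s =1 s' -> is_solution r x n s = is_solution r x n s'.
Proof.
move=> ss'; rewrite /is_solution; congr andb; apply: eq_forallb => i; first by rewrite ss'.
by under eq_bigr do rewrite ss'.
Qed.

Lemma is_smallest_solutionP d r (x : xfam d) n s :
  is_smallest_solution r x n s <->
  is_solution r x n s /\ (forall t, is_solution r x n t -> forall i, (s i <= t i)%N).
Proof.
split=> [/andP[s_sol /forallP least] | [s_sol least]].
  split=> // t t_sol i; have /andP[/forallP t_le _] := t_sol.
  pose T : {dffun forall i, 'I_(n i).+1} := [ffun i => Ordinal (t_le i : (t i < (n i).+1)%N)].
  have TE : (fun i => nat_of_ord (T i)) =1 t by move=> j; rewrite ffunE.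
  by have := least T; rewrite (eq_is_solution _ _ _ TE) t_sol => /forallP/(_ i); rewrite ffunE.
apply/andP; split=> //; apply/forallP => T; apply/implyP => /least T_ge.
by apply/forallP.
Qed.

Lemma is_solution_stepP d r (y : xfam d) (k T : 'I_d -> nat) (c : 'I_d -> 'I_d -> nat) s :
  (forall i h j, (h <= k i)%N ->
     y i h j = if j == i then - h%:Z else if (T i < h)%N then (c i j)%:Z else 0) ->
  is_solution r y k s <-> (forall i, (s i <= k i)%N) /\ threshold_solution r c T s.
Proof.
move=> yE.
have sumE : (forall i, (s i <= k i)%N) -> forall j,
    (r j)%:Z + \sum_i y i (s i) j = (supply r c [set i | (T i < s i)%N] j)%:Z - (s j)%:Z.
  move=> s_le j; rewrite (bigD1 j) //= yE // eqxx /supply big_mkcondl /=.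
  under [in RHS]eq_bigr do rewrite inE.
  rewrite PoszD (big_morph Posz PoszD (erefl 0)).
  rewrite (eq_bigr (fun i => (if (T i < s i)%N then c i j else 0%N)%:Z)).
    by rewrite addrCA addrC.
  by move=> i ij; rewrite yE // eq_sym (negbTE ij); case: ifP.
split=> [/andP[/forallP s_le /forallP s_eq0] | [s_le s_sol]].
  by split=> // j; have := s_eq0 j; rewrite sumE // => /eqP; lia.
by apply/andP; split; apply/forallP => // j; rewrite sumE // -s_sol subrr.
Qed.

Section SimpleSystem.
Variables (d : nat) (r : 'I_d -> nat) (x : xfam d) (k p : 'I_d -> nat).
Hypothesis x_S : in_S x k.
Hypothesis k_gt0 : forall i, (0 < k i)%N.
Hypothesis x_diag : forall i h, (h <= k i)%N -> x i h i = - (h%:Z).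
Hypothesis k_sol : is_solution r x k k.
Hypothesis x_simple : forall i, (p i <= k i - 1)%N /\
  (forall h j, (h <= p i)%N -> j != i -> x i h j = 0) /\
  (forall h j, ((p i).+1 <= h <= k i)%N -> j != i -> x i h j = x i (k i) j).

Definition height a i : nat := `|x a (k a) i|%N.

Lemma p_lt i : (p i < k i)%N.
Proof. by have [p_le _] := x_simple i; have := k_gt0 i; lia. Qed.

Lemma x_stepE i h j : (h <= k i)%N ->
  x i h j = if j == i then - h%:Z else if (p i < h)%N then (height i j)%:Z else 0.
Proof.
move=> h_le; case: eqP => [->|/eqP ji]; first exact: x_diag.
have [_ [x0 xC]] := x_simple i; case: ltnP => [p_h | h_p]; last exact: x0.
by rewrite xC ?p_h // gez0_abs // (in_S_ge0 x_S) // eq_sym.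
Qed.

Definition jumps (q : 'I_d -> nat) i := cyc_jump (p i) (q i) (k i).

Lemma cyc_stepE q : (forall i, (q i < k i)%N) -> forall i h j, (h <= k i)%N ->
  cyc x q k i h j =
    if j == i then - h%:Z else if (jumps q i < h)%N then (height i j)%:Z else 0.
Proof.
move=> q_lt i h j h_le; rewrite /cyc; case: eqP => [->|/eqP ji].
  by apply: cycf_opp_id => // m m_le; exact: x_diag.
apply: cycf_step => // [|m m_le]; first exact: p_lt.
by rewrite x_stepE // (negbTE ji).
Qed.

Lemma k_supplyT i : k i = supply r height setT i.
Proof.
have [_ k_thr] := iffLR (is_solution_stepP _ _ x_stepE) k_sol.
by rewrite {1}k_thr; congr supply; apply/setP => a; rewrite !inE p_lt.
Qed.

Lemma cyc_smallestP q : (forall i, (q i < k i)%N) ->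
  is_smallest_solution r (cyc x q k) k k <-> fixset (activate r height (jumps q)) = setT.
Proof.
move=> q_lt; have jumps_lt i : (jumps q i < supply r height setT i)%N.
  by rewrite -k_supplyT cyc_jump_lt ?p_lt.
have cycE := cyc_stepE q_lt.
apply: iff_trans (is_smallest_solutionP _ _ _ _) _.
apply: iff_trans _ (iff_sym (fixset_activateP jumps_lt)).
split=> [[_ least] s s_le s_sol i | least].
  rewrite -k_supplyT; apply: least; apply/(is_solution_stepP _ _ cycE).
  by split=> // j; rewrite k_supplyT.
split.
  apply/(is_solution_stepP _ _ cycE); split=> // j; rewrite {1}k_supplyT; congr supply.
  by apply/setP => i; rewrite !inE cyc_jump_lt ?p_lt.
move=> s /(is_solution_stepP _ _ cycE) [s_le s_sol] i; rewrite k_supplyT.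
by apply: least => // j; rewrite -k_supplyT.
Qed.

Lemma card_cyc_smallest :
  #|[pred q : {dffun forall i, 'I_(k i)} |
      is_smallest_solution r (cyc x (fun i => q i) k) k k]|
  = #|[pred t : {dffun forall i, 'I_(k i)} |
      fixset (activate r height (fun i => t i)) == setT]|.
Proof.
pose shift (q : {dffun forall i, 'I_(k i)}) : {dffun forall i, 'I_(k i)} :=
  [ffun i => Ordinal (cyc_jump_lt (p_lt i) (ltn_ord (q i)))].
have shift_inj : injective shift.
  move=> q q' /ffunP eq_shift; apply/ffunP => i; apply/val_inj.
  apply: (cyc_jump_inj (p_lt i) (ltn_ord _) (ltn_ord _)).
  by have := congr1 val (eq_shift i); rewrite !ffunE; exact: id.
rewrite -[in RHS]cardsE -(card_preimset _ shift_inj); apply: eq_card => q; rewrite !inE.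
have shiftE : jumps (fun i => q i) =1 (fun i => shift q i) by move=> i; rewrite ffunE.
rewrite -(@eq_fixset _ (activate r height (jumps (fun i => q i)))); last first.
  by move=> A; apply/setP => i; rewrite !inE shiftE.
by apply/idP/eqP => /(cyc_smallestP (fun i => ltn_ord (q i))).
Qed.

Lemma card_cyc_smallest_forests :
  #|[pred q : {dffun forall i, 'I_(k i)} |
      is_smallest_solution r (cyc x (fun i => q i) k) k k]|
  = \sum_(j : {ffun 'I_d -> option 'I_d} | in_D j) \prod_i coef r height (j i) i.
Proof. by rewrite card_cyc_smallest (card_fixset_activate k_supplyT) sum_level_widths. Qed.

Lemma kcoefE (j : {ffun 'I_d -> option 'I_d}) i :
  in_D j -> kcoef r x k (j i) i = (coef r height (j i) i)%:Z.
Proof.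
move=> /forallP/(_ i)/andP[ji _]; rewrite /kcoef /coef; case: (j i) ji => //= a ai.
by rewrite /height gez0_abs // (in_S_ge0 x_S) //; apply: contraNneq ai => ->.
Qed.

End SimpleSystem.

Theorem lemma4p4 (d : nat) (hd : (2 <= d)%N) (r : 'I_d -> nat)
  (hr : exists i, (0 < r i)%N) (x : xfam d) (k : 'I_d -> nat)
  (hx : in_Sbar r x k) (hsimple : simple_system x k) :
  (#|[pred q : {dffun forall i : 'I_d, 'I_(k i)} |
       is_smallest_solution r (cyc x (fun i => nat_of_ord (q i)) k) k k]|)%:Z
  = \sum_(j : {ffun 'I_d -> option 'I_d} | in_D j)
       \prod_(i < d) kcoef r x k (j i) i.
Proof.
(* The count does not use [hd] nor [hr]. *)
case: hx => x_S [k_gt0 [/andP[k_sol _] x_diag]].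
have [p x_simple] := fin_all_exists hsimple.
rewrite (card_cyc_smallest_forests x_S k_gt0 x_diag k_sol x_simple) -natz natr_sum.
apply: eq_bigr => j inDj; rewrite natr_prod; apply: eq_bigr => i _.
by rewrite natz (kcoefE r x_S i inDj).
Qed.
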